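(* Let $A$ and $B$ be (possibly isomorphic) strongly regular graphs with the same parameters, and let $A'$, $B'$ be obtained by individualizing a single vertex $a_1\in V(A)$, resp. $b_1\in V(B)$ (coloring it with color $1$; all other vertices uncolored). Let $G=G(A',B')$ and $H=G(A',A')$. (1) $\omega^{(r)}(G)=\omega^{(r)}(H)$ for all integers $r\ge0$, and therefore $\omega^{(\bullet)}(G)=\omega^{(\bullet)}(H)$. (2) If $\mathrm{WL}_{3/2}(A')\ne\mathrm{WL}_{3/2}(B')$, then $\mathrm{WL}_{3/2}(G)\ne\mathrm{WL}_{3/2}(H)$.
   Context: Graphs are finite, simple and undirected. A strongly regular graph with parameters $(n,d,\lambda,\mu)$ is an $n$-vertex $d$-regular graph in which any two adjacent vertices have $\lambda$ common neighbours and any two distinct non-adjacent vertices have $\mu$ common neighbours. Construction $G(A',B')$ (uncolored) for $m=1$: the vertex-disjoint union of $A$ and $B$ plus a connecting vertex $c_1$ adjacent to $a_1$ and $b_1$ and one pendant vertex $p_{1,1}$ adjacent only to $c_1$. $H=G(A',A')$ is built in the same way from two disjoint copies of $A'$. Walk invariants: $w_k(x,y)$ = number of walks of length $k$ from $x$ to $y$ in an $N$-vertex graph, $w_*(x,y)=(w_0(x,y),\dots,w_{N-1}(x,y))$; $\omega_0(x)=w_*(x,x)$, $\omega_{r+1}(x)=\big(\omega_r(x),\{\!\{(w_*(x,y),\omega_r(y))\}\!\}_{y}\big)$ ($\{\!\{\cdot\}\!\}$ = multiset); $\omega^{(r)}(G)=\{\!\{\omega_r(x)\}\!\}_{x\in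 V(G)}$ and $\omega^{(\bullet)}(G)=\omega^{(N)}(G)$. Color refinement on a vertex-colored $N$-vertex graph $X$: $C^0(x)$ is the color of $x$ (common default for uncolored vertices), $C^{r+1}(x)=\big(C^r(x),\{\!\{C^r(y)\}\!\}_{y\in N(x)}\big)$, $\mathrm{WL}_1(X)=\{\!\{C^N(x)\}\!\}_{x}$. For a vertex $x$, $X_x$ is $X$ with $x$ additionally given a special new color (the same special color for every choice of $x$, distinct from all colors already used). $\mathrm{WL}_{3/2}(X)=\{\!\{\mathrm{WL}_1(X_x)\}\!\}_{x\in V(X)}$. *)

From mathcomp Require Import all_boot.
Set Implicit Arguments. Unset Strict Implicit. Unset Printing Implicit Defensive.

Definition simple_graph (V : finType) (e : rel V) : Prop :=
  symmetric e /\ irreflexive e.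

Definition srg (V : finType) (e : rel V) (n d lam mu : nat) : Prop :=
  [/\ simple_graph e,
      #|V| = n,
      (forall x : V, #|[set y | e x y]| = d),
      (forall x y : V, e x y -> #|[set z | e x z && e y z]| = lam)
    & (forall x y : V, x != y -> ~~ e x y -> #|[set z | e x z && e y z]| = mu)].

(* Vertices: inl (inl a) = vertices of A, inl (inr b) = vertices of B,
   inr false = connecting vertex c_1, inr true = pendant vertex p_{1,1}. *)
Definition GV (VA VB : finType) : finType := ((VA + VB) + bool)%type.

Definition Gedge (VA VB : finType) (eA : rel VA) (a1 : VA) (eB : rel VB) (b1 : VB)
  : rel (GV VA VB) :=
  fun u v =>
    match u, v with
    | inl (inl x), inl (inl y) => eA x y
    | inl (inr x), inl (inr y) => eB x y
    | inl (inl x), inr false => x == a1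
    | inr false, inl (inl x) => x == a1
    | inl (inr x), inr false => x == b1
    | inr false, inl (inr x) => x == b1
    | inr false, inr true => true
    | inr true, inr false => true
    | _, _ => false
    end.

(* A finite multiset of codes is represented canonically by its sorted list:
   msetn s = msetn t  <->  perm_eq s t. Structured values (tuples, sequences,
   multisets) are encoded injectively as natural numbers via [pickle]. *)
Definition msetn (s : seq nat) : seq nat := sort leq s.

Fixpoint walks (V : finType) (e : rel V) (k : nat) (x y : V) : nat :=
  match k with
  | 0 => nat_of_bool (x == y)
  | k'.+1 => \sum_(z | e x z) walks e k' z y
  end.

Definition wstar (V : finType) (e : rel V) (x y : V) : seq nat :=
  mkseq (fun k => walks e k x y) #|V|.

Fixpoint omega_v (V : finType) (e : rel V) (r : nat) (x : V) : nat :=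
  match r with
  | 0 => pickle (wstar e x x)
  | r'.+1 => pickle (omega_v e r' x,
                     msetn [seq pickle (wstar e x y, omega_v e r' y) | y <- enum V])
  end.

Definition omega (V : finType) (e : rel V) (r : nat) : seq nat :=
  msetn [seq omega_v e r x | x <- enum V].

Definition omega_bullet (V : finType) (e : rel V) : seq nat := omega e #|V|.

(* Vertex colors are [option nat]: ordinary colors are [Some c]
   (uncolored = Some 0, individualized = Some 1); [None] is the special
   new color used for X_x. *)
Fixpoint cr (V : finType) (e : rel V) (col : V -> option nat) (r : nat) (x : V) : nat :=
  match r with
  | 0 => pickle (col x)
  | r'.+1 => pickle (cr e col r' x,
                     msetn [seq cr e col r' y | y <- enum V & e x y])
  end.

Definition WL1 (V : finType) (e : rel V) (col : V -> option nat) : seq nat :=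
  msetn [seq cr e col #|V| x | x <- enum V].

Definition indiv (V : finType) (col : V -> option nat) (x : V) : V -> option nat :=
  fun y => if y == x then None else col y.

Definition WL32 (V : finType) (e : rel V) (col : V -> option nat) : seq nat :=
  msetn [seq pickle (WL1 e (indiv col x)) | x <- enum V].

Definition uncolored (V : finType) : V -> option nat := fun _ => Some 0.

Definition indiv1 (V : finType) (a1 : V) : V -> option nat :=
  fun y => if y == a1 then Some 1 else Some 0.

From HB Require Import structures.
From mathcomp Require Import all_boot zify.
Set Implicit Arguments. Unset Strict Implicit. Unset Printing Implicit Defensive.

(* Part (1).  Type a vertex of a block by its class (equal, adjacent, non-adjacent)
   with respect to the attaching vertex, and give [c] and [p] types 3 and 4.
   Strong regularity with common parameters makes the number of walks of each
   length between two vertices a function of a short description of the pair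
   (the kinds of walks it supports), and the multiset of these descriptions seen
   from a vertex a function of its type.  Hence [omega_r(x)] depends only on
   the type of [x], and [G] and [H] have the same multiset of types.

   Part (2).  In [G] with any vertex individualized, color refinement
   recognises [c] after two rounds as the only vertex of degree 3 with a leaf
   neighbour, so the stable colors of [G] determine those of the blocks (with
   the neighbour of [c] colored [1]) and of [{p}].  In [G(A',B')] and
   [G(A',A')] the codes coming from the vertices of the first block and from
   [c], [p] agree, and cancelling them leaves [WL_{3/2}(B') = WL_{3/2}(A')]. *)

Lemma eq_msetnP s t : reflect (msetn s = msetn t) (perm_eq s t).
Proof. exact: (perm_sortP leq_total leq_trans anti_leq). Qed.

Lemma perm_msetn s : perm_eq (msetn s) s.
Proof. by rewrite /msetn perm_sort. Qed.

Lemma has_msetn (P : pred nat) s : has P (msetn s) = has P s.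
Proof. exact/perm_has/perm_msetn. Qed.

Lemma perm_rem (T : eqType) (x : T) s t : perm_eq s t -> perm_eq (rem x s) (rem x t).
Proof. by move=> st; apply/permP => P; rewrite !count_rem (permP st) (perm_mem st). Qed.

Definition mrem (X s : seq nat) : seq nat := foldr (fun x acc => rem x acc) s X.

Lemma perm_mrem X Y s : perm_eq s (X ++ Y) -> perm_eq (mrem X s) Y.
Proof.
elim: X Y s => [|x X IH] Y s //= sXY.
have /(perm_rem x) : perm_eq (mrem X s) (x :: Y).
  by apply: IH; rewrite (permPl sXY) -cat1s perm_catCA.
by rewrite /= eqxx.
Qed.

Lemma msetn_mrem X L Y : msetn (mrem (X ++ Y) (msetn (X ++ L ++ Y))) = msetn L.
Proof.
apply/eq_msetnP/perm_mrem; rewrite (permPl (perm_msetn _)) -catA perm_cat2l.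
by rewrite perm_catC.
Qed.

Lemma count_split3 (T : Type) (f : T -> nat) (P : pred T) s :
  (forall z, f z < 3) ->
  count P s = count (fun z => P z && (f z == 0)) s + count (fun z => P z && (f z == 1)) s
     + count (fun z => P z && (f z == 2)) s.
Proof.
move=> f_lt3; elim: s => //= z s ->; have := f_lt3 z.
case: (P z) => /=; case: (f z) => [|[|[|k]]] //= _; lia.
Qed.

Lemma count_enum_pred1 (T : finType) (y : T) (P : pred T) :
  count (fun z => (y == z) && P z) (enum T) = P y.
Proof.
rewrite (eq_count (a2 := fun z => P y && (z == y))) => [|z]; last first.
  by rewrite eq_sym andbC; case: eqP => [->|_]; rewrite ?andbF.
case: (P y); last by rewrite count_pred0.
by rewrite (eq_count (a2 := pred1 y)) // count_uniq_mem ?enum_uniq ?mem_enum.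
Qed.

Lemma count_enum_set (V : finType) (P : pred V) : count P (enum V) = #|[set x | P x]|.
Proof.
rewrite cardsE cardE /enum_mem size_filter count_filter.
by apply: eq_count => x; rewrite /= !inE andbT.
Qed.

Lemma count_enum_sum (T : finType) (P : pred T) : count P (enum T) = \sum_(z | P z) 1.
Proof. by rewrite -sum1_count big_enum_cond. Qed.

(** * Strongly regular graphs *)

Definition adj_class (V : finType) (e : rel V) (x y : V) : nat :=
  if x == y then 0 else if e x y then 1 else 2.

(* The multiset of [(adj_class x z, adj_class z a)] over all [z], for a pair
   [(x, a)] of class [i]. *)
Definition pair_profile (n d lam mu i : nat) : seq (nat * nat) :=
  match i with
  | 0 => (0, 0) :: nseq d (1, 1) ++ nseq (n.-1 - d) (2, 2)
  | 1 => (0, 1) :: (1, 0) :: nseq lam (1, 1) ++ nseq (d.-1 - lam) (1, 2)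
           ++ nseq (d.-1 - lam) (2, 1) ++ nseq ((n.-1 - d) - (d.-1 - lam)) (2, 2)
  | _ => (0, 2) :: (2, 0) :: nseq mu (1, 1) ++ nseq (d - mu) (1, 2)
           ++ nseq (d - mu) (2, 1) ++ nseq ((n.-1 - d).-1 - (d - mu)) (2, 2)
  end.

Definition class_profile (n d lam mu : nat) : seq nat :=
  [seq p.2 | p <- pair_profile n d lam mu 0].

Definition nbr_profile (n d lam mu i : nat) : seq nat :=
  [seq p.2 | p <- pair_profile n d lam mu i & p.1 == 1].

Section StronglyRegular.
Variables (V : finType) (e : rel V) (n d lam mu : nat).
Hypothesis srg_e : srg e n d lam mu.

Lemma srg_sym : symmetric e. Proof. by case: srg_e => -[]. Qed.
Lemma srg_irr : irreflexive e. Proof. by case: srg_e => -[]. Qed.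
Lemma srg_card : #|V| = n. Proof. by case: srg_e. Qed.

Lemma srg_deg x : count (e x) (enum V) = d.
Proof. by case: srg_e => _ _ degP _ _; rewrite count_enum_set degP. Qed.

Lemma count_common_nbrs x a : count (fun z => e x z && e a z) (enum V) =
  if adj_class e x a == 0 then d else if adj_class e x a == 1 then lam else mu.
Proof.
case: srg_e => _ _ _ lamP muP; rewrite count_enum_set /adj_class.
have [<-|xa] := eqVneq x a.
  by rewrite -(srg_deg x) count_enum_set; under eq_finset do rewrite andbb.
by case exa: (e x a); [rewrite (lamP _ _ exa) | rewrite muP ?exa].
Qed.

Lemma adj_class_lt3 x y : adj_class e x y < 3.
Proof. by rewrite /adj_class; case: eqP => //; case: (e x y). Qed.

Lemma adj_classC x y : adj_class e x y = adj_class e y x.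
Proof. by rewrite /adj_class eq_sym srg_sym. Qed.

Lemma adj_class_eq0 x y : (adj_class e x y == 0) = (x == y).
Proof. by rewrite /adj_class; case: (x == y); case: (e x y). Qed.

Lemma adj_class_eq1 x y : (adj_class e x y == 1) = e x y.
Proof.
rewrite /adj_class; case: (x =P y) => [->|_]; first by rewrite srg_irr.
by case: (e x y).
Qed.

Lemma count_adj_class x r : count (fun z => adj_class e x z == r) (enum V) =
  if r == 0 then 1 else if r == 1 then d else if r == 2 then n.-1 - d else 0.
Proof.
have tot : count predT (enum V) = n by rewrite count_predT -cardT srg_card.
have c0 : count (fun z => adj_class e x z == 0) (enum V) = 1.
  rewrite -[RHS](count_enum_pred1 x predT).
  by apply: eq_count => z; rewrite adj_class_eq0 andbT.
have c1 : count (fun z => adj_class e x z == 1) (enum V) = d.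
  by under eq_count do rewrite adj_class_eq1; apply: srg_deg.
have := count_split3 predT (enum V) (adj_class_lt3 x); rewrite tot /= c0 c1.
case: r => [|[|[|r]]] //= split3; rewrite ?c0 ?c1 //; first lia.
rewrite (eq_count (a2 := pred0)) ?count_pred0 // => z /=.
by have := adj_class_lt3 x z; case: (adj_class e x z) => [|[|[|k]]].
Qed.

(* Counting the pairs of each type by rows, columns, the zero row/column and
   the common neighbours pins down all nine entries of the 3x3 table. *)
Lemma pair_profileP x a :
  perm_eq [seq (adj_class e x z, adj_class e z a) | z <- enum V]
          (pair_profile n d lam mu (adj_class e x a)).
Proof.
pose N r j := count (fun z => (adj_class e x z == r) && (adj_class e z a == j)) (enum V).
have row r : N r 0 + N r 1 + N r 2 =
    if r == 0 then 1 else if r == 1 then d else if r == 2 then n.-1 - d else 0.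
  by rewrite -(count_adj_class x) (count_split3 _ _ (adj_class_lt3 ^~ a)).
have col j : N 0 j + N 1 j + N 2 j =
    if j == 0 then 1 else if j == 1 then d else if j == 2 then n.-1 - d else 0.
  rewrite -(count_adj_class a) (count_split3 _ _ (adj_class_lt3 x)) /N.
  by congr (_ + _ + _); apply: eq_count => z; rewrite andbC adj_classC.
have row0 j : N 0 j = (adj_class e x a == j).
  by rewrite /N; under eq_count do rewrite adj_class_eq0; apply: count_enum_pred1.
have col0 r : N r 0 = (adj_class e x a == r).
  rewrite /N -(count_enum_pred1 a (fun z => adj_class e x z == r)).
  by apply: eq_count => z; rewrite adj_class_eq0 andbC eq_sym.
have N11 : N 1 1 = if adj_class e x a == 0 then d
                   else if adj_class e x a == 1 then lam else mu.
  rewrite -count_common_nbrs; apply: eq_count => z.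
  by rewrite !adj_class_eq1 (srg_sym z).
have lt3 : all (fun p => (p.1 < 3) && (p.2 < 3))
    ([seq (adj_class e x z, adj_class e z a) | z <- enum V]
     ++ pair_profile n d lam mu (adj_class e x a)).
  rewrite all_cat; apply/andP; split.
    by apply/allP => _ /mapP[z _ ->]; rewrite !adj_class_lt3.
  by case: (adj_class e x a) => [|[|[|k]]]; rewrite /= !all_cat !all_nseq /= ?orbT.
apply/allP => -[r j] /(allP lt3) /andP[r3 j3] /=; apply/eqP.
rewrite count_map (eq_count (a2 := fun z => (adj_class e x z == r) && (adj_class e z a == j)));
  last by move=> z; rewrite /= xpair_eqE.
have r0 := row 0; have r1 := row 1; have r2 := row 2.
have c0 := col 0; have c1 := col 1; have c2 := col 2.
have n00 := row0 0; have n01 := row0 1; have n02 := row0 2.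
have m00 := col0 0; have m01 := col0 1; have m02 := col0 2.
move: N11 r0 r1 r2 c0 c1 c2 n00 n01 n02 m00 m01 m02; rewrite -/(N r j).
move: (adj_class e x a) (adj_class_lt3 x a) => [|[|[|k]]] // _ /=;
rewrite !count_cat !count_nseq /=;
move: r j r3 j3 => [|[|[|r]]] [|[|[|j]]] //= _ _; lia.
Qed.

Lemma nbr_profileP x a :
  perm_eq [seq adj_class e y a | y <- enum V & e x y] (nbr_profile n d lam mu (adj_class e x a)).
Proof.
have := perm_map snd (perm_filter (fun p => p.1 == 1) (pair_profileP x a)).
by rewrite filter_map -map_comp (eq_filter (a2 := e x)) // => z; apply: adj_class_eq1.
Qed.

Lemma class_profileP a :
  perm_eq [seq adj_class e z a | z <- enum V] (class_profile n d lam mu).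
Proof.
have := perm_map snd (pair_profileP a a).
by rewrite -map_comp /adj_class eqxx.
Qed.

Lemma sum_nbr_class x a (F : nat -> nat) :
  \sum_(y | e x y) F (adj_class e y a) = \sum_(t <- nbr_profile n d lam mu (adj_class e x a)) F t.
Proof. by rewrite -(perm_big _ (nbr_profileP x a)) big_map big_filter big_enum_cond. Qed.

Lemma perm_map_class_profile (U T : eqType) (h : V -> U) (F : U -> T) (g : nat -> T) a :
  (forall z, F (h z) = g (adj_class e z a)) ->
  perm_eq [seq F u | u <- [seq h z | z <- enum V]] [seq g j | j <- class_profile n d lam mu].
Proof.
move=> FE; rewrite -map_comp (eq_map FE) (map_comp g (adj_class e ^~ a)).
exact/perm_map/class_profileP.
Qed.

Lemma perm_map_pair_profile (U T : eqType) (h : V -> U) (F : U -> T) (g : nat * nat -> T) x a :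
  (forall z, F (h z) = g (adj_class e x z, adj_class e z a)) ->
  perm_eq [seq F u | u <- [seq h z | z <- enum V]]
          [seq g q | q <- pair_profile n d lam mu (adj_class e x a)].
Proof.
move=> FE; rewrite -map_comp (eq_map FE).
rewrite (map_comp g (fun z => (adj_class e x z, adj_class e z a))).
exact/perm_map/pair_profileP.
Qed.

End StronglyRegular.

(** * Invariants determined by vertex types *)

(* The value of [omega_v] at a vertex of type [i], in a graph where the type
   of [x] determines [w_*(x,x)] through [S] and the multiset of
   [(w_*(x,y), type y)] through [P]. *)
Fixpoint omega_type (S : nat -> seq nat) (P : nat -> seq (seq nat * nat)) (r i : nat) : nat :=
  match r with
  | 0 => pickle (S i)
  | r'.+1 => pickle (omega_type S P r' i,
                     msetn [seq pickle (p.1, omega_type S P r' p.2) | p <- P i])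
  end.

Section OmegaByType.
Variables (V : finType) (e : rel V) (type : V -> nat).
Variables (S : nat -> seq nat) (P : nat -> seq (seq nat * nat)).
Hypothesis wstar_self : forall x, wstar e x x = S (type x).
Hypothesis wstar_profile :
  forall x, perm_eq [seq (wstar e x y, type y) | y <- enum V] (P (type x)).

Lemma omega_vE r x : omega_v e r x = omega_type S P r (type x).
Proof.
elim: r x => [|r IH] x /=; first by rewrite wstar_self.
rewrite IH; congr (pickle (_, _)); apply/eq_msetnP.
under eq_map do rewrite IH.
by apply: perm_trans (perm_map _ (wstar_profile x)); rewrite -[X in perm_eq _ X]map_comp.
Qed.

Lemma omega_by_type r K : perm_eq [seq type x | x <- enum V] K ->
  omega e r = msetn [seq omega_type S P r i | i <- K].
Proof.
move=> typeK; apply/eq_msetnP; under eq_map do rewrite omega_vE.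
by rewrite map_comp; apply: perm_map.
Qed.

End OmegaByType.

Fixpoint cr_type (c : nat -> option nat) (N : nat -> seq nat) (r i : nat) : nat :=
  match r with
  | 0 => pickle (c i)
  | r'.+1 => pickle (cr_type c N r' i, msetn [seq cr_type c N r' j | j <- N i])
  end.

Section ColorRefinementByType.
Variables (V : finType) (e : rel V) (col : V -> option nat) (type : V -> nat).
Variables (c : nat -> option nat) (N : nat -> seq nat).
Hypothesis col_type : forall x, col x = c (type x).
Hypothesis nbr_type : forall x, perm_eq [seq type y | y <- enum V & e x y] (N (type x)).

Lemma cr_by_type r x : cr e col r x = cr_type c N r (type x).
Proof.
elim: r x => [|r IH] x /=; first by rewrite col_type.
rewrite IH; congr (pickle (_, _)); apply/eq_msetnP.
by under eq_map do rewrite IH; rewrite map_comp; apply: perm_map.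
Qed.

End ColorRefinementByType.

Lemma cr_indiv1E (V : finType) (e : rel V) (n d lam mu : nat) (v1 : V) r x :
  srg e n d lam mu ->
  cr e (indiv1 v1) r x =
  cr_type (fun i => if i == 0 then Some 1 else Some 0) (nbr_profile n d lam mu) r (adj_class e x v1).
Proof.
move=> srg_e; apply: (cr_by_type (type := adj_class e ^~ v1)) => y.
  by rewrite adj_class_eq0.
exact: nbr_profileP.
Qed.

Lemma perm_cr_indiv1 (VA VB : finType) (eA : rel VA) (eB : rel VB) (n d lam mu : nat)
    (a1 : VA) (b1 : VB) r :
  srg eA n d lam mu -> srg eB n d lam mu ->
  perm_eq [seq cr eA (indiv1 a1) r x | x <- enum VA] [seq cr eB (indiv1 b1) r y | y <- enum VB].
Proof.
move=> srgA srgB.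
rewrite (eq_map (fun x => cr_indiv1E a1 r x srgA)) (eq_map (fun y => cr_indiv1E b1 r y srgB)).
rewrite !(map_comp _ (adj_class _ ^~ _)); apply: perm_map.
by rewrite (permPl (class_profileP srgA a1)) perm_sym class_profileP.
Qed.

(** * Walks in G(A',B') *)

Section GluedGraph.
Variables (VA VB : finType) (eA : rel VA) (a1 : VA) (eB : rel VB) (b1 : VB).

Notation G := (Gedge eA a1 eB b1).
Notation c := (inr false : GV VA VB).
Notation p := (inr true : GV VA VB).

Definition GV_seq : seq (GV VA VB) :=
  [seq inl (inl a) | a <- enum VA] ++ [seq inl (inr b) | b <- enum VB] ++ [:: c; p].

Lemma perm_enum_GV : perm_eq (enum (GV VA VB)) GV_seq.
Proof.
apply: uniq_perm; first exact: enum_uniq.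
  rewrite /GV_seq cat_uniq map_inj_uniq ?enum_uniq; last by move=> x y [].
  rewrite cat_uniq map_inj_uniq ?enum_uniq; last by move=> x y [].
  rewrite /= !andbT; apply/andP; split.
    apply/hasPn => y; rewrite mem_cat !inE => /orP [/mapP [b _ ->]|/orP [] /eqP ->];
      by apply/mapP => [[? _]].
  by apply/norP; split; [|apply/norP; split] => //; apply/mapP => [[? _]].
move=> x; rewrite mem_enum /GV_seq !mem_cat; case: x => [[a|b]|[]] /=.
- by rewrite (map_f (fun a => inl (inl a) : GV VA VB)) ?mem_enum.
- by rewrite (map_f (fun b => inl (inr b) : GV VA VB)) ?mem_enum ?orbT.
- by rewrite !inE !orbT.
- by rewrite !inE !orbT.
Qed.

Lemma card_GV : #|GV VA VB| = #|VA| + #|VB| + 2.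
Proof. by rewrite !card_sum card_bool. Qed.

Lemma big_GV (P : pred (GV VA VB)) (F : GV VA VB -> nat) :
  \sum_(y | P y) F y = \sum_(a | P (inl (inl a))) F (inl (inl a)) +
    \sum_(b | P (inl (inr b))) F (inl (inr b)) + P c * F c + P p * F p.
Proof.
have sumE (T : finType) (Q : pred T) (H : T -> nat) :
  \sum_(y | Q y) H y = \sum_(y <- enum T | Q y) H y by rewrite big_enum_cond.
rewrite sumE (perm_big _ perm_enum_GV) /GV_seq !big_cat !big_map /=.
rewrite (sumE _ (fun a => P (inl (inl a)))) (sumE _ (fun b => P (inl (inr b)))) !big_cons big_nil.
by case: (P c); case: (P p); rewrite /= ?mul1n ?mul0n ?addn0 ?add0n ?addnA.
Qed.

Lemma sum_nbrA a (F : GV VA VB -> nat) :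
  \sum_(y | G (inl (inl a)) y) F y = \sum_(y | eA a y) F (inl (inl y)) + (a == a1) * F c.
Proof. by rewrite big_GV /= big_pred0_eq mul0n !addn0. Qed.

Lemma sum_nbrB b (F : GV VA VB -> nat) :
  \sum_(y | G (inl (inr b)) y) F y = \sum_(y | eB b y) F (inl (inr y)) + (b == b1) * F c.
Proof. by rewrite big_GV /= big_pred0_eq mul0n add0n addn0. Qed.

Lemma sum_nbrC (F : GV VA VB -> nat) :
  \sum_(y | G c y) F y = F (inl (inl a1)) + F (inl (inr b1)) + F p.
Proof. by rewrite big_GV /= !big_pred1_eq mul0n addn0 mul1n. Qed.

Lemma sum_nbrP (F : GV VA VB -> nat) : \sum_(y | G p y) F y = F c.
Proof. by rewrite big_GV /= !big_pred0_eq mul1n mul0n addn0. Qed.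

End GluedGraph.

(* A vertex of a block is described by its
   class with respect to the attaching vertex ([a1] or [b1]); the boolean [s]
   stands for [c] ([false]) or [p] ([true]).  [Inside r] counts the walks that
   stay in one block between two vertices of class [r], [Leaving i j] those
   between vertices of classes [i] and [j] of one block that pass through [c],
   and [Crossing i j] those from one block to the other. *)
Inductive walk_kind :=
  | Inside of nat
  | Leaving of nat & nat
  | Crossing of nat & nat
  | ToSpecial of bool & nat
  | FromSpecial of bool & nat
  | Specials of bool & bool.

Lemma walk_kind_eq_dec : comparable walk_kind.
Proof. by rewrite /comparable /decidable; decide equality; exact: decP eqP. Qed.

HB.instance Definition _ := comparableMixin walk_kind_eq_dec.

Section WalkKinds.
Variables n d lam mu : nat.
Notation nbrs := (nbr_profile n d lam mu).

Fixpoint nwalks (k : nat) (q : walk_kind) : nat :=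
  match k with
  | 0 => match q with Inside r => r == 0 | Specials s t => s == t | _ => 0 end
  | k'.+1 =>
    match q with
    | Inside r => \sum_(t <- nbrs r) nwalks k' (Inside t)
    | Leaving i j => \sum_(t <- nbrs i) nwalks k' (Leaving t j)
                     + (i == 0) * nwalks k' (FromSpecial false j)
    | Crossing i j => \sum_(t <- nbrs i) nwalks k' (Crossing t j)
                      + (i == 0) * nwalks k' (FromSpecial false j)
    | ToSpecial s i => \sum_(t <- nbrs i) nwalks k' (ToSpecial s t)
                       + (i == 0) * nwalks k' (Specials false s)
    | FromSpecial false j => nwalks k' (Inside j) + nwalks k' (Leaving 0 j)
                             + nwalks k' (Crossing 0 j) + nwalks k' (FromSpecial true j)
    | FromSpecial true j => nwalks k' (FromSpecial false j)
    | Specials false t => nwalks k' (ToSpecial t 0) + nwalks k' (ToSpecial t 0)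
                          + nwalks k' (Specials true t)
    | Specials true t => nwalks k' (Specials false t)
    end
  end.

Definition nwalks_sum (k : nat) (qs : seq walk_kind) : nat := sumn [seq nwalks k q | q <- qs].


Definition walk_seq (qs : seq walk_kind) : seq nat :=
  mkseq (fun k => nwalks_sum k qs) (n + n + 2).

(* Walk kinds from a vertex of type [i] to itself, and the multiset of
   (walk kinds, target type) over all targets; types [3] and [4] are [c] and [p]. *)
Definition kinds_self (i : nat) : seq walk_kind :=
  if i < 3 then [:: Inside 0; Leaving i i] else [:: Specials (i == 4) (i == 4)].

Definition kinds_profile (i : nat) : seq (seq walk_kind * nat) :=
  if i < 3 then
    [seq ([:: Inside q.1; Leaving i q.2], q.2) | q <- pair_profile n d lam mu i]
    ++ [seq ([:: Crossing i j], j) | j <- class_profile n d lam mu]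
    ++ [:: ([:: ToSpecial false i], 3); ([:: ToSpecial true i], 4)]
  else
    [seq ([:: FromSpecial (i == 4) j], j) | j <- class_profile n d lam mu]
    ++ [seq ([:: FromSpecial (i == 4) j], j) | j <- class_profile n d lam mu]
    ++ [:: ([:: Specials (i == 4) false], 3); ([:: Specials (i == 4) true], 4)].

Definition vtype_profile : seq nat :=
  class_profile n d lam mu ++ class_profile n d lam mu ++ [:: 3; 4].

Definition omega_glued (r i : nat) : nat :=
  omega_type (fun i => walk_seq (kinds_self i))
             (fun i => [seq (walk_seq D.1, D.2) | D <- kinds_profile i]) r i.

End WalkKinds.

Section GluedWalks.
Variables (VA VB : finType) (eA : rel VA) (a1 : VA) (eB : rel VB) (b1 : VB).
Variables n d lam mu : nat.
Hypotheses (srgA : srg eA n d lam mu) (srgB : srg eB n d lam mu).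

Notation G := (Gedge eA a1 eB b1).

Definition vtype (x : GV VA VB) : nat :=
  match x with
  | inl (inl a) => adj_class eA a a1
  | inl (inr b) => adj_class eB b b1
  | inr s => 3 + s
  end.

Definition walk_kinds (x z : GV VA VB) : seq walk_kind :=
  match x, z with
  | inl (inl a), inl (inl a') => [:: Inside (adj_class eA a a'); Leaving (vtype x) (vtype z)]
  | inl (inr b), inl (inr b') => [:: Inside (adj_class eB b b'); Leaving (vtype x) (vtype z)]
  | inl _, inl _ => [:: Crossing (vtype x) (vtype z)]
  | inl _, inr s => [:: ToSpecial s (vtype x)]
  | inr s, inl _ => [:: FromSpecial s (vtype z)]
  | inr s, inr t => [:: Specials s t]
  end.

Lemma walksE k x z : walks G k x z = nwalks_sum n d lam mu k (walk_kinds x z).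
Proof.
rewrite /nwalks_sum; elim: k x z => [|k IH] x z.
  by case: x => [[a|b]|[]]; case: z => [[a'|b']|[]];
     rewrite /= ?addn0 ?adj_class_eq0.
rewrite /= (eq_bigr _ (fun y _ => IH y z)); set W := nwalks n d lam mu k.
have [cA0 cB0] : adj_class eA a1 a1 = 0 /\ adj_class eB b1 b1 = 0 by rewrite /adj_class !eqxx.
case: x => [[a|b]|[]].
- rewrite sum_nbrA -(adj_class_eq0 eA).
  case: z => [[a'|b']|t] /=; under eq_bigr do rewrite ?addn0.
  + rewrite big_split /= (sum_nbr_class srgA a a' (fun t => W (Inside t))).
    by rewrite (sum_nbr_class srgA a a1 (fun t => W (Leaving t _))) !addn0 addnA.
  + by rewrite (sum_nbr_class srgA a a1 (fun t => W (Crossing t _))) ?addn0.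
  + by rewrite (sum_nbr_class srgA a a1 (fun t => W (ToSpecial _ t))) ?addn0.
- rewrite sum_nbrB -(adj_class_eq0 eB).
  case: z => [[a'|b']|t] /=; under eq_bigr do rewrite ?addn0.
  + by rewrite (sum_nbr_class srgB b b1 (fun t => W (Crossing t _))) ?addn0.
  + rewrite big_split /= (sum_nbr_class srgB b b' (fun t => W (Inside t))).
    by rewrite (sum_nbr_class srgB b b1 (fun t => W (Leaving t _))) !addn0 addnA.
  + by rewrite (sum_nbr_class srgB b b1 (fun t => W (ToSpecial _ t))) ?addn0.
- rewrite sum_nbrP.
  by case: z => [[a'|b']|t].
- rewrite sum_nbrC.
  case: z => [[a'|b']|t] /=; rewrite ?addn0 ?cA0 ?cB0.
  + rewrite (adj_classC srgA); lia.
  + rewrite (adj_classC srgB); lia.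
  + by [].
Qed.

Lemma walk_kinds_self x : walk_kinds x x = kinds_self (vtype x).
Proof. by case: x => [[a|b]|[]]; rewrite /kinds_self //= adj_class_lt3 /adj_class !eqxx. Qed.

Lemma walk_kinds_profile x :
  perm_eq [seq (walk_kinds x z, vtype z) | z <- enum (GV VA VB)] (kinds_profile n d lam mu (vtype x)).
Proof.
apply: perm_trans (perm_map _ (perm_enum_GV VA VB)) _.
case: x => [[a|b]|s]; rewrite /GV_seq /kinds_profile ?adj_class_lt3 !map_cat.
- apply: perm_cat; last apply: perm_cat; last by [].
    exact: (perm_map_pair_profile srgA).
  exact: (perm_map_class_profile srgB).
- rewrite perm_catCA; apply: perm_cat; last apply: perm_cat; last by [].
    exact: (perm_map_pair_profile srgB).
  exact: (perm_map_class_profile srgA).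
- case: s; (apply: perm_cat; last apply: perm_cat; last by []);
    try exact: (perm_map_class_profile srgA); exact: (perm_map_class_profile srgB).
Qed.

Lemma vtype_profileP : perm_eq [seq vtype x | x <- enum (GV VA VB)] (vtype_profile n d lam mu).
Proof.
apply: perm_trans (perm_map _ (perm_enum_GV VA VB)) _.
rewrite /GV_seq /vtype_profile !map_cat -[class_profile _ _ _ _]map_id.
apply: perm_cat; last apply: perm_cat; last by [].
  exact: (perm_map_class_profile srgA).
exact: (perm_map_class_profile srgB).
Qed.

Lemma omega_Gedge r :
  omega G r = msetn [seq omega_glued n d lam mu r i | i <- vtype_profile n d lam mu].
Proof.
have wstarE x y : wstar G x y = walk_seq n d lam mu (walk_kinds x y).
  rewrite /wstar card_GV (srg_card srgA) (srg_card srgB).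
  by apply: eq_mkseq => k; apply: walksE.
apply: omega_by_type vtype_profileP => x; first by rewrite wstarE walk_kinds_self.
under eq_map do rewrite wstarE.
have := perm_map (fun D => (walk_seq n d lam mu D.1, D.2)) (walk_kinds_profile x).
by rewrite -map_comp.
Qed.

End GluedWalks.

(** * Decoding color refinement on G(A',B') *)

Definition code_split (x : nat) : nat * seq nat := odflt (0, [::]) (unpickle x).
Definition code_prev (x : nat) : nat := (code_split x).1.
Definition code_nbrs (x : nat) : seq nat := (code_split x).2.
Definition code_deg (x : nat) : nat := size (code_nbrs x).
Definition code_color (x : nat) : option nat := odflt (Some 0) (unpickle x).

(* In [G(A',B')] this singles out the connecting vertex [c]. *)
Definition connector_code (x : nat) : bool :=
  (code_deg x == 3) && has (fun y => code_deg y == 1) (code_nbrs x).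

(* Recovers, from the code of a block vertex in [G] at round [r + 3], its
   color-refinement code at round [r] in the block, where the neighbour of [c]
   gets color [1]: the color is read off at round [0], adjacency to [c] from
   the neighbours' codes, and the neighbour [c] itself is dropped. *)
Definition decode_color (x : nat) : option nat :=
  if code_color (iter 3 code_prev x) == None then None
  else if has connector_code (code_nbrs x) then Some 1 else Some 0.

Fixpoint decode (r : nat) (x : nat) : nat :=
  match r with
  | 0 => pickle (decode_color x)
  | r'.+1 => pickle (decode r' (code_prev x),
                     msetn [seq decode r' y | y <- code_nbrs x & ~~ connector_code y])
  end.

Lemma decode0 x : decode 0 x = pickle (decode_color x).
Proof. by []. Qed.

Lemma decodeS r x :
  decode r.+1 x = pickle (decode r (code_prev x),
                          msetn [seq decode r y | y <- code_nbrs x & ~~ connector_code y]).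
Proof. by []. Qed.

Section CodeReading.
Variables (V : finType) (e : rel V) (col : V -> option nat).

Lemma crS r x :
  cr e col r.+1 x = pickle (cr e col r x, msetn [seq cr e col r y | y <- enum V & e x y]).
Proof. by []. Qed.

Lemma code_prev_cr r x : code_prev (cr e col r.+1 x) = cr e col r x.
Proof. by rewrite /code_prev /code_split crS pickleK. Qed.

Lemma code_nbrs_cr r x :
  code_nbrs (cr e col r.+1 x) = msetn [seq cr e col r y | y <- enum V & e x y].
Proof. by rewrite /code_nbrs /code_split crS pickleK. Qed.

Lemma code_color_cr x : code_color (cr e col 0 x) = col x.
Proof. by rewrite /code_color [cr _ _ 0 _]/= pickleK. Qed.

Lemma iter_code_prev_cr k m x : iter k code_prev (cr e col (m + k) x) = cr e col m x.
Proof. by elim: k m => [|k IH] m; rewrite ?addn0 // iterSr addnS code_prev_cr IH. Qed.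

Lemma code_deg_cr r x : code_deg (cr e col r.+1 x) = count (e x) (enum V).
Proof. by rewrite /code_deg code_nbrs_cr size_sort size_map size_filter. Qed.

Lemma connector_code_cr r x : connector_code (cr e col r.+2 x) =
  (count (e x) (enum V) == 3) && has (fun y => count (e y) (enum V) == 1) [seq y <- enum V | e x y].
Proof.
rewrite /connector_code code_deg_cr code_nbrs_cr has_msetn has_map; congr (_ && _).
by apply: eq_in_has => y _ /=; rewrite code_deg_cr.
Qed.

Lemma eq_cr (col' : V -> option nat) : col =1 col' -> forall r x, cr e col r x = cr e col' r x.
Proof.
move=> eq_col; elim=> [|r IH] x /=; first by rewrite eq_col.
by rewrite IH; congr (pickle (_, msetn _)); apply: eq_map.
Qed.

End CodeReading.

Section Decode.
Variables (V W : finType) (e : rel V) (col : V -> option nat) (eW : rel W).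
Variables (iota : W -> V) (c0 : V).
Hypothesis iota_inj : injective iota.
Hypothesis iota_neq : forall w, iota w != c0.
Hypothesis iota_nbr : forall w y, e (iota w) y -> y != c0 -> exists w', y = iota w'.
Hypothesis iota_edge : forall w w', e (iota w) (iota w') = eW w w'.
Hypothesis connector_codeE : forall r y, connector_code (cr e col r.+2 y) = (y == c0).

Definition decode_col (w : W) : option nat :=
  if col (iota w) == None then None else if e (iota w) c0 then Some 1 else Some 0.

Lemma perm_nbr_iota w :
  perm_eq [seq y <- enum V | e (iota w) y && (y != c0)] [seq iota w' | w' <- enum W & eW w w'].
Proof.
apply: uniq_perm; first exact/filter_uniq/enum_uniq.
  by rewrite map_inj_uniq //; exact/filter_uniq/enum_uniq.
move=> y; rewrite mem_filter mem_enum andbT; apply/idP/idP.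
  move=> /andP [eiy yc]; have [w' y_w'] := iota_nbr eiy yc; rewrite y_w' in eiy *.
  by apply: map_f; rewrite mem_filter mem_enum -iota_edge eiy.
move=> /mapP [w']; rewrite mem_filter mem_enum => /andP [eww _] ->.
by rewrite iota_edge eww iota_neq.
Qed.

Lemma decode_cr r w : decode r (cr e col (r + 3) (iota w)) = cr eW decode_col r w.
Proof.
elim: r w => [|r IH] w.
  rewrite decode0 /decode_color iter_code_prev_cr code_color_cr [cr _ _ 0 _]/= /decode_col.
  case: (col (iota w) == None) => //; congr (pickle (if _ then _ else _)).
  rewrite code_nbrs_cr has_msetn has_map (eq_has (a2 := pred1 c0)) => [|y]; last exact: connector_codeE.
  by rewrite has_pred1 mem_filter mem_enum andbT.
rewrite addSn decodeS code_prev_cr IH code_nbrs_cr crS; congr (pickle (_, _)); apply/eq_msetnP.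
apply: perm_trans (perm_map _ (perm_filter _ (perm_msetn _))) _.
rewrite filter_map -map_comp -filter_predI.
rewrite (eq_filter (a2 := fun y => e (iota w) y && (y != c0))) => [|y]; last first.
  by rewrite /= addn3 connector_codeE andbC.
apply: perm_trans (perm_map _ (perm_nbr_iota w)) _.
by rewrite -map_comp (eq_map IH).
Qed.

End Decode.

Section GluedDecoding.
Variables (VA VB : finType) (eA : rel VA) (a1 : VA) (eB : rel VB) (b1 : VB).
Variables n d lam mu : nat.
Hypotheses (srgA : srg eA n d lam mu) (srgB : srg eB n d lam mu).

Notation G := (Gedge eA a1 eB b1).
Notation c := (inr false : GV VA VB).
Notation p := (inr true : GV VA VB).
Notation inA := (fun a : VA => inl (inl a) : GV VA VB).
Notation inB := (fun b : VB => inl (inr b) : GV VA VB).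
Notation inP := (fun _ : unit => p).

Lemma degG_A a : count (G (inA a)) (enum (GV VA VB)) = d + (a == a1).
Proof. by rewrite count_enum_sum sum_nbrA -count_enum_sum (srg_deg srgA) muln1. Qed.

Lemma degG_B b : count (G (inB b)) (enum (GV VA VB)) = d + (b == b1).
Proof. by rewrite count_enum_sum sum_nbrB -count_enum_sum (srg_deg srgB) muln1. Qed.

Lemma degG_c : count (G c) (enum (GV VA VB)) = 3.
Proof. by rewrite count_enum_sum sum_nbrC. Qed.

Lemma degG_p : count (G p) (enum (GV VA VB)) = 1.
Proof. by rewrite count_enum_sum sum_nbrP. Qed.

(* A block vertex of degree 3 has [d >= 2], so none of its neighbours is a leaf. *)
Lemma connector_code_G col r y : connector_code (cr G col r.+2 y) = (y == c).
Proof.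
rewrite connector_code_cr; case: y => [[a|b]|[]].
- rewrite degG_A /=; case deg3: (d + (a == a1) == 3) => //=.
  apply/negbTE/hasPn => -[[a'|b']|[]]; rewrite mem_filter mem_enum andbT //= => _.
    by rewrite degG_A; move: deg3; case: (a == a1); case: (a' == a1) => /=; lia.
  by rewrite degG_c.
- rewrite degG_B /=; case deg3: (d + (b == b1) == 3) => //=.
  apply/negbTE/hasPn => -[[a'|b']|[]]; rewrite mem_filter mem_enum andbT //= => _.
    by rewrite degG_B; move: deg3; case: (b == b1); case: (b' == b1) => /=; lia.
  by rewrite degG_c.
- by rewrite degG_p.
- by rewrite degG_c /=; apply/hasP; exists p; rewrite ?degG_p // mem_filter mem_enum.
Qed.

Lemma decode_cr_A col r a :
  decode r (cr G col (r + 3) (inA a)) = cr eA (decode_col G col inA c) r a.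
Proof.
apply: decode_cr => //; [by move=> ? ? [] | | exact: connector_code_G].
by move=> w [[a'|b']|[]] // _ _; exists a'.
Qed.

Lemma decode_cr_B col r b :
  decode r (cr G col (r + 3) (inB b)) = cr eB (decode_col G col inB c) r b.
Proof.
apply: decode_cr => //; [by move=> ? ? [] | | exact: connector_code_G].
by move=> w [[a'|b']|[]] // _ _; exists b'.
Qed.

Lemma decode_cr_p col r :
  decode r (cr G col (r + 3) p) = cr (fun _ _ => false) (decode_col G col inP c) r tt.
Proof.
apply: decode_cr => //; [by move=> [] [] | | exact: connector_code_G].
by move=> _ [[]|[]].
Qed.

Definition decode_WL1 (L : seq nat) : seq nat :=
  msetn [seq decode n (iter n.-1 code_prev x) | x <- L & ~~ connector_code x].

Lemma decode_WL1_G col :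
  decode_WL1 (WL1 G col) =
  msetn ([seq cr eA (decode_col G col inA c) n a | a <- enum VA]
         ++ [seq cr eB (decode_col G col inB c) n b | b <- enum VB]
         ++ [:: cr (fun _ _ => false) (decode_col G col inP c) n tt]).
Proof.
have n_gt0 : 0 < n by rewrite -(srg_card srgA); apply/card_gt0P; exists a1.
apply/eq_msetnP; rewrite /WL1.
apply: perm_trans (perm_map _ (perm_filter _ (perm_msetn _))) _.
rewrite filter_map -map_comp card_GV (srg_card srgA) (srg_card srgB).
rewrite (eq_filter (a2 := predC1 c)) => [|y]; last by rewrite /= addn2 connector_code_G.
rewrite (eq_map (g := fun y => decode n (cr G col (n + 3) y))) => [|y]; last first.
  by rewrite /= -(iter_code_prev_cr _ _ n.-1 (n + 3)); congr (decode n (iter _ _ (cr _ _ _ _))); lia.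
apply: perm_trans (perm_map _ (perm_filter _ (perm_enum_GV VA VB))) _.
rewrite /GV_seq !filter_cat !filter_map !map_cat -!map_comp /=.
by rewrite (eq_map (decode_cr_A col n)) (eq_map (decode_cr_B col n)) decode_cr_p.
Qed.

End GluedDecoding.

Definition base_codes (V : finType) (e : rel V) (v1 : V) (r : nat) : seq nat :=
  [seq cr e (indiv1 v1) r x | x <- enum V].

Definition indiv_codes (V : finType) (e : rel V) (v1 : V) (r : nat) (u : V) : seq nat :=
  [seq cr e (indiv (indiv1 v1) u) r x | x <- enum V].

Definition pendant_code (r : nat) (b : bool) : nat :=
  cr (fun _ _ : unit => false) (fun _ => if b then None else Some 1) r tt.

Section GluedWL32.
Variables (VA VB : finType) (eA : rel VA) (a1 : VA) (eB : rel VB) (b1 : VB).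
Variables n d lam mu : nat.
Hypotheses (srgA : srg eA n d lam mu) (srgB : srg eB n d lam mu).

Notation G := (Gedge eA a1 eB b1).

Definition glued_codes (v : GV VA VB) : seq nat :=
  match v with
  | inl (inl u) => indiv_codes eA a1 n u ++ base_codes eB b1 n ++ [:: pendant_code n false]
  | inl (inr w) => base_codes eA a1 n ++ indiv_codes eB b1 n w ++ [:: pendant_code n false]
  | inr s => base_codes eA a1 n ++ base_codes eB b1 n ++ [:: pendant_code n s]
  end.

Lemma decode_WL1_indiv v :
  decode_WL1 n (WL1 G (indiv (@uncolored _) v)) = msetn (glued_codes v).
Proof.
rewrite (decode_WL1_G _ _ srgA srgB); congr msetn.
have colA u a : decode_col G (indiv (@uncolored _) u) (fun a => inl (inl a)) (inr false) a =
    match u with inl (inl u) => indiv (indiv1 a1) u a | _ => indiv1 a1 a end.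
  case: u => [[u|w]|[]]; rewrite /decode_col /indiv /indiv1 //=.
  by rewrite -[inl (inl a) == _]/(a == u); case: (a == u).
have colB u b : decode_col G (indiv (@uncolored _) u) (fun b => inl (inr b)) (inr false) b =
    match u with inl (inr w) => indiv (indiv1 b1) w b | _ => indiv1 b1 b end.
  case: u => [[u|w]|[]]; rewrite /decode_col /indiv /indiv1 //=.
  by rewrite -[inl (inr b) == _]/(b == w); case: (b == w).
rewrite (eq_map (fun a => eq_cr eA (colA v) n a)) (eq_map (fun b => eq_cr eB (colB v) n b)).
rewrite /pendant_code (eq_cr (fun _ _ => false) (col' := fun _ => if v == inr true then None else Some 1)); last first.
  by move=> []; rewrite /decode_col /indiv /=; case: (inr true =P v) => [<-|/eqP]; rewrite ?eqxx // eq_sym => /negbTE ->.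
by case: v => [[u|w]|[]].
Qed.

Definition decode_WL32 (L : seq nat) : seq nat :=
  [seq pickle (decode_WL1 n (odflt [::] (unpickle x))) | x <- L].

Lemma decode_WL32_G :
  perm_eq (decode_WL32 (WL32 G (@uncolored _)))
    ([seq pickle (msetn (indiv_codes eA a1 n u ++ base_codes eB b1 n ++ [:: pendant_code n false]))
        | u <- enum VA]
     ++ [seq pickle (msetn (base_codes eA a1 n ++ indiv_codes eB b1 n w ++ [:: pendant_code n false]))
        | w <- enum VB]
     ++ [seq pickle (msetn (base_codes eA a1 n ++ base_codes eB b1 n ++ [:: pendant_code n s]))
        | s <- [:: false; true]]).
Proof.
rewrite /decode_WL32 /WL32; apply: perm_trans (perm_map _ (perm_msetn _)) _.
rewrite -map_comp (eq_map (g := fun v => pickle (msetn (glued_codes v)))) => [|v]; last first.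
  by rewrite /comp pickleK decode_WL1_indiv.
apply: perm_trans (perm_map _ (perm_enum_GV VA VB)) _.
by rewrite /GV_seq !map_cat !enumT -!map_comp -!enumT.
Qed.

End GluedWL32.

(* Removing the codes common to all vertices of [A] and to [c], [p], the codes
   of the vertices of [B] in [G(A',B')] must match those of the second copy of
   [A] in [G(A',A')]. *)
Lemma WL32_Gedge_inj (VA VB : finType) (eA : rel VA) (eB : rel VB) (n d lam mu : nat)
    (a1 : VA) (b1 : VB) :
  srg eA n d lam mu -> srg eB n d lam mu ->
  WL32 (Gedge eA a1 eB b1) (@uncolored _) = WL32 (Gedge eA a1 eA a1) (@uncolored _) ->
  WL32 eA (indiv1 a1) = WL32 eB (indiv1 b1).
Proof.
move=> srgA srgB WL32_eq.
have GH := decode_WL32_G a1 b1 srgA srgB; rewrite WL32_eq perm_sym in GH.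
have := perm_trans GH (decode_WL32_G a1 a1 srgA srgA).
set baseA := base_codes eA a1 n; set pend := pendant_code n.
have swapB X Y : msetn (X ++ base_codes eB b1 n ++ Y) = msetn (X ++ baseA ++ Y).
  by apply/eq_msetnP; rewrite perm_cat2l perm_cat2r perm_sym (perm_cr_indiv1 _ _ _ srgA srgB).
rewrite (eq_map (fun u => congr1 pickle (swapB _ _))).
rewrite [X in perm_eq (_ ++ _ ++ X) _](eq_map (fun s => congr1 pickle (swapB _ _))).
pose strip x := pickle (msetn (mrem (baseA ++ [:: pend false]) (odflt [::] (unpickle x)))).
rewrite perm_cat2l perm_cat2r => /(perm_map strip).
rewrite -!map_comp /comp /strip.
under eq_map do rewrite pickleK msetn_mrem.
under [X in perm_eq _ X]eq_map do rewrite pickleK msetn_mrem.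
rewrite /WL32 /WL1 (srg_card srgA) (srg_card srgB) -!enumT => perm_WL1.
by apply/eq_msetnP; rewrite perm_sym; exact: perm_WL1.
Qed.

Theorem lemma6p4 (VA VB : finType) (eA : rel VA) (eB : rel VB)
  (n d lam mu : nat) (a1 : VA) (b1 : VB) :
  srg eA n d lam mu -> srg eB n d lam mu ->
  ((forall r : nat,
      omega (Gedge eA a1 eB b1) r = omega (Gedge eA a1 eA a1) r)
   /\ omega_bullet (Gedge eA a1 eB b1) = omega_bullet (Gedge eA a1 eA a1))
  /\
  (WL32 eA (indiv1 a1) <> WL32 eB (indiv1 b1) ->
   WL32 (Gedge eA a1 eB b1) (@uncolored _) <> WL32 (Gedge eA a1 eA a1) (@uncolored _)).
Proof.
move=> srgA srgB.
have omega_eq r : omega (Gedge eA a1 eB b1) r = omega (Gedge eA a1 eA a1) r.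
  by rewrite (omega_Gedge a1 b1 srgA srgB) (omega_Gedge a1 a1 srgA srgA).
split; first split => //.
  by rewrite /omega_bullet !card_GV (srg_card srgA) (srg_card srgB) omega_eq.
by move=> WL32_neq /(WL32_Gedge_inj srgA srgB).
Qed.
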